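(* Let $n\equiv 1\pmod 4$. Then the set $$\{h,\ x_n,x_{n-1},\ldots,x_{\frac{n+7}2},x_{\frac{n+5}2},\ x_{\frac{n+3}2}x_{\frac{n-1}2}\cdots x_6x_4,\ x_{\frac{n+1}2}x_{\frac{n-3}2}\cdots x_5x_3\}$$ is a generating set of $\mathcal{AM}_n$ of minimum size. In particular, $\mathcal{AM}_n$ has rank $\frac{n+1}2+1$.
   Context: Let $\Omega_n=\{1<2<\cdots<n\}$ and $\mathcal{I}_n$ the monoid of all partial injective maps of $\Omega_n$, written on the right and composed left to right. $\mathcal{AI}_n$ is the set of all $\alpha\in\mathcal{I}_n$ with $\alpha=\sigma|_{\mathrm{Dom}(\alpha)}$ for some even permutation $\sigma$; $\mathcal{PMI}_n$ is the set of monotone (order-preserving or order-reversing) elements and $\mathcal{AM}_n=\mathcal{AI}_n\cap\mathcal{PMI}_n$. The rank of a monoid is the minimum size of a generating set. $h$ is the permutation $i\mapsto n+1-i$. Let $X_i=\Omega_n\setminus\{i\}$. Define $x_1,\dots,x_n$ as the (unique) order-preserving partial permutations with: $x_1$: domain $X_1$, image $X_n$ if $n$ is odd and $X_{n-1}$ if $n$ is even; $x_2$: domain $X_2$, image $X_{n-1}$ if $n$ is odd and $X_n$ if $n$ is even; $x_i$ ($3\leqslant i\leqslant n$): domain $X_i$, image $X_{i-2}$. The products $x_{\frac{n+3}2}x_{\frac{n-1}2}\cdots x_4$ and $x_{\frac{n+1}2}x_{\frac{n-3}2}\cdots x_3$ have indices decreasing by $2$. *)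

From mathcomp Require Import all_boot all_fingroup.
Set Implicit Arguments. Unset Strict Implicit. Unset Printing Implicit Defensive.

(* Omega_n = {1 < ... < n} is represented by 'I_n : point p (1-based) is the
   ordinal p-1.  A partial map of Omega_n is a finite function
   'I_n -> option 'I_n (None = undefined). *)
Definition pfun (n : nat) := {ffun 'I_n -> option 'I_n}.

Definition is_pinj n (f : pfun n) : Prop :=
  forall k l a, f k = Some a -> f l = Some a -> k = l.

(* composition written on the right, left to right: x (f g) = (x f) g *)
Definition pcomp n (f g : pfun n) : pfun n := [ffun k => obind g (f k)].
Definition pid n : pfun n := [ffun k => Some k].

Definition pprod n (s : seq (pfun n)) : pfun n := foldr (@pcomp n) (pid n) s.

Definition in_AI n (f : pfun n) : Prop :=
  is_pinj f /\
  exists s : {perm 'I_n}, ~~ odd_perm s /\ forall k a, f k = Some a -> a = s k.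

Definition order_preserving n (f : pfun n) : Prop :=
  forall x y a b, f x = Some a -> f y = Some b -> x <= y -> a <= b.
Definition order_reversing n (f : pfun n) : Prop :=
  forall x y a b, f x = Some a -> f y = Some b -> x <= y -> b <= a.
Definition in_PMI n (f : pfun n) : Prop :=
  is_pinj f /\ (order_preserving f \/ order_reversing f).

Definition in_AM n (f : pfun n) : Prop := in_AI f /\ in_PMI f.

Definition generates n (A : {set pfun n}) (M : pfun n -> Prop) : Prop :=
  forall f, M f <-> exists2 s : seq (pfun n), all (mem A) s & f = pprod s.

Definition has_rank n (M : pfun n -> Prop) (r : nat) : Prop :=
  (exists A : {set pfun n}, #|A| = r /\ generates A M) /\
  (forall A : {set pfun n}, generates A M -> r <= #|A|).

Definition hmap n : pfun n := [ffun k => Some (rev_ord k)].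

(* the unique order-preserving partial permutation with domain
   Omega_n \ {i} and image Omega_n \ {j} (i, j 1-based):
   the point k (0-based) /= i-1 is sent to bump (j-1) (unbump (i-1) k). *)
Definition opmap n (i j : nat) : pfun n :=
  [ffun k : 'I_n => if val k == i.-1 then None
                    else insub (bump j.-1 (unbump i.-1 k))].

(* x_1, ..., x_n as in the paper (1-based index i) *)
Definition xgen n (i : nat) : pfun n :=
  if i == 1 then opmap n 1 (if odd n then n else n.-1)
  else if i == 2 then opmap n 2 (if odd n then n.-1 else n)
  else opmap n i (i - 2).

(* x_{(n+3)/2} x_{(n-1)/2} ... x_6 x_4  (indices decreasing by 2) *)
Definition prod_even n : pfun n :=
  pprod [seq xgen n ((n + 3)./2 - 2 * k) | k <- iota 0 (((n + 3)./2 - 4)./2).+1].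
(* x_{(n+1)/2} x_{(n-3)/2} ... x_5 x_3 *)
Definition prod_odd n : pfun n :=
  pprod [seq xgen n ((n + 1)./2 - 2 * k) | k <- iota 0 (((n + 1)./2 - 3)./2).+1].

Definition gen_set n : {set pfun n} :=
  [set:: hmap n :: [seq xgen n i | i <- rev (iota (n + 5)./2 (n - (n + 5)./2).+1)]
         ++ [:: prod_even n; prod_odd n]].

From mathcomp Require Import all_boot all_fingroup zify.
Set Implicit Arguments. Unset Strict Implicit. Unset Printing Implicit Defensive.

(* Number the points 0, ..., n-1 = 4m and let [gapmap a b] be the
   order-preserving map whose domain misses [a] and whose image misses [b].
   The generators and their conjugates by h (an even permutation, being a
   product of 2m transpositions) give the maps [gapmap a (a +- 2)] moving a
   gap towards the middle; with 2m -> 0, 2m+1 -> 1 and their mirror images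
   these connect any two points of the same parity, so every [gapmap a b] with
   a = b mod 2 is generated.  An order-preserving element of AM_n is reduced
   to a partial identity, a product of maps [gapmap c c], by shifting the gaps
   of its domain and image two steps to the right; evenness excludes the one
   configuration where no shift is possible.  Order-reversing elements are
   order-preserving ones times h.

   Conversely, the only total elements of AM_n are 1 and h, so a generating set
   contains h; and writing [gapmap i i] as a product of generators, the first
   non-total factor has its only gap at i or n-1-i.  A generating set thus has
   an element for each of the (n+1)/2 orbits of h besides h itself. *)

Lemma ltn_sum_in (T : finType) (S : {pred T}) (F G : T -> nat) :
  (forall x, x \notin S -> F x <= G x) ->
  \sum_(x in S) F x < \sum_(x in S) G x -> \sum_x F x < \sum_x G x.
Proof.
move=> le_out lt_in.
rewrite [\sum_x F x](bigID (mem S)) [\sum_x G x](bigID (mem S)) /= -addSn.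
by apply: leq_add => //; apply: leq_sum => x; exact: le_out.
Qed.

Lemma closed_gap_last (P : pred nat) n :
  (forall g, g.+2 < n -> ~~ P g -> ~~ P g.+1 && ~~ P g.+2) ->
  forall x y, x < y < n -> ~~ P x -> P y -> x = n - 2.
Proof.
move=> closed x y /andP[xy yn]; move: {2}(y - x) (erefl (y - x)) => d.
elim: d x xy => [|d IH] x xy yxd Px Py; first lia.
case: (ltnP x.+2 n) => x2n; last lia.
case/andP: (closed _ x2n Px) => Px1 Px2.
case: (eqVneq y x.+1) => [yx1|yx1]; first by move: Px1; rewrite -yx1 Py.
have x1n := IH x.+1 ltac:(lia) ltac:(lia) Px1 Py.
by move: Px2; rewrite (_ : x.+2 = y) ?Py //; lia.
Qed.

Lemma val_tperm n (x y z : 'I_n) : nat_of_ord (tperm x y z) =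
  if z == x :> nat then nat_of_ord y else if z == y :> nat then nat_of_ord x else z.
Proof.
case: tpermP => [->|->|zx zy]; rewrite ?eqxx //; first by case: eqP => // /val_inj ->.
by do 2!case: eqP => [/val_inj //|_].
Qed.

Lemma odd_perm_fix_low n (s : {perm 'I_n}) : 1 < n ->
  (forall x : 'I_n, x < n - 2 -> s x = x) -> s != 1%g -> odd_perm s.
Proof.
move=> n_gt1 s_low s_ne1.
have o1n : n - 2 < n by lia. have o2n : n - 1 < n by lia.
pose o1 := Ordinal o1n; pose o2 := Ordinal o2n.
have o12 : o1 != o2 by rewrite -val_eqE /=; apply/eqP; lia.
have top (x : 'I_n) : n - 2 <= x -> x = o1 \/ x = o2.
  move=> xn; have xn1 := ltn_ord x.
  have [x1|x2] : x = n - 2 :> nat \/ x = n - 1 :> nat by lia.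
  - by left; apply: val_inj.
  - by right; apply: val_inj.
have s_top (x : 'I_n) : n - 2 <= x -> n - 2 <= s x.
  move=> xn; case: (ltnP (s x) (n - 2)) => // sx_low.
  by move: xn; rewrite -(perm_inj (s_low _ sx_low)); lia.
have s_o1 : s o1 = o2.
  case: (top (s o1) (s_top o1 (leqnn _))) => // s1; case/eqP: s_ne1.
  have s2 : s o2 = o2.
    case: (top (s o2) (s_top o2 _)) => //= [|s2]; first lia.
    by move: o12; rewrite (perm_inj (etrans s2 (esym s1))) eqxx.
  by apply/permP => x; rewrite perm1; case: (ltnP x (n - 2)) => [|/top[]->]; auto.
have s_o2 : s o2 = o1.
  case: (top (s o2) (s_top o2 _)) => //= [|s2]; first lia.
  by move: o12; rewrite (perm_inj (etrans s_o1 (esym s2))) eqxx.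
suff -> : s = tperm o1 o2 by rewrite odd_tperm.
apply/permP => x; case: (ltnP x (n - 2)) => [xn|/top[]->]; last by rewrite tpermR.
- by rewrite s_low // tpermD // -val_eqE /=; apply/eqP; lia.
- by rewrite tpermL.
Qed.

Section PartialMaps.
Variable n : nat.
Implicit Types (f g h : pfun n) (A : {set pfun n}) (x y : 'I_n).

Lemma pfun_val_inj f g : (forall x, omap val (f x) = omap val (g x)) -> f = g.
Proof.
move=> fg; apply/ffunP => x; move: (fg x).
by case: (f x) => [y|]; case: (g x) => [z|] //= [/val_inj ->].
Qed.

Lemma pidE x : pid n x = Some x.
Proof. by rewrite ffunE. Qed.

Lemma pcompE f g x : pcomp f g x = obind g (f x).
Proof. by rewrite ffunE. Qed.

Lemma pcomp_SomeP f g x a :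
  pcomp f g x = Some a -> exists2 u, f x = Some u & g u = Some a.
Proof. by rewrite pcompE; case: (f x) => //= u; exists u. Qed.

Lemma pcompA f g h : pcomp (pcomp f g) h = pcomp f (pcomp g h).
Proof. by apply/ffunP => x; rewrite !pcompE; case: (f x) => //= y; rewrite pcompE. Qed.

Lemma pcomp_idl f : pcomp (pid n) f = f.
Proof. by apply/ffunP => x; rewrite pcompE pidE. Qed.

Lemma pcomp_idr f : pcomp f (pid n) = f.
Proof. by apply/ffunP => x; rewrite pcompE; case: (f x) => //= y; rewrite pidE. Qed.

Lemma pprod_cat (s1 s2 : seq (pfun n)) :
  pprod (s1 ++ s2) = pcomp (pprod s1) (pprod s2).
Proof. by elim: s1 => [|f s IH] /=; rewrite ?pcomp_idl // IH pcompA. Qed.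

Definition generated A f := exists2 s, all (mem A) s & f = pprod s.

Lemma generated_pid A : generated A (pid n).
Proof. by exists [::]. Qed.

Lemma generated_mem A f : f \in A -> generated A f.
Proof. by move=> fA; exists [:: f]; rewrite /= ?fA ?pcomp_idr. Qed.

Lemma generated_pcomp A f g :
  generated A f -> generated A g -> generated A (pcomp f g).
Proof.
by move=> [s sA ->] [t tA ->]; exists (s ++ t); rewrite ?all_cat ?sA ?tA ?pprod_cat.
Qed.

Lemma generated_pprod A (s : seq (pfun n)) :
  {in s, forall g, generated A g} -> generated A (pprod s).
Proof.
elim: s => [|g s IH] sA /=; first exact: generated_pid.
apply: generated_pcomp; first by apply: sA; rewrite inE eqxx.
by apply: IH => h hs; apply: sA; rewrite inE hs orbT.
Qed.

Lemma pinj_pcomp f g : is_pinj f -> is_pinj g -> is_pinj (pcomp f g).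
Proof.
move=> fI gI x y a /pcomp_SomeP[u fu gu] /pcomp_SomeP[v fv gv].
by move: fv; rewrite (gI _ _ _ gv gu); exact: fI.
Qed.

Lemma AI_pcomp f g : in_AI f -> in_AI g -> in_AI (pcomp f g).
Proof.
move=> [fI [s [s_even fs]]] [gI [t [t_even gt]]]; split; first exact: pinj_pcomp.
exists (s * t)%g; rewrite odd_permM (negbTE s_even) (negbTE t_even).
by split=> // x a /pcomp_SomeP[u fu gu]; rewrite permM (gt _ _ gu) (fs _ _ fu).
Qed.

Lemma op_pcomp f g :
  order_preserving f -> order_preserving g -> order_preserving (pcomp f g).
Proof.
move=> fm gm x y a b /pcomp_SomeP[u fu gu] /pcomp_SomeP[v fv gv] xy.
exact: gm gu gv (fm _ _ _ _ fu fv xy).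
Qed.

Lemma PMI_pcomp f g : in_PMI f -> in_PMI g -> in_PMI (pcomp f g).
Proof.
move=> [fI fm] [gI gm]; split; first exact: pinj_pcomp.
case: fm => fm; case: gm => gm; [left|right|right|left] => x y a b
  /pcomp_SomeP[u fu gu] /pcomp_SomeP[v fv gv] xy.
- exact: gm gu gv (fm _ _ _ _ fu fv xy).
- exact: gm gu gv (fm _ _ _ _ fu fv xy).
- exact: gm gv gu (fm _ _ _ _ fu fv xy).
- exact: gm gv gu (fm _ _ _ _ fu fv xy).
Qed.

Lemma AM_pcomp f g : in_AM f -> in_AM g -> in_AM (pcomp f g).
Proof. by move=> [fAI fPMI] [gAI gPMI]; split; [exact: AI_pcomp | exact: PMI_pcomp]. Qed.

Lemma AM_pid : in_AM (pid n).
Proof.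
have pidI : is_pinj (pid n) by move=> x y a; rewrite !pidE => -[<-] [].
split; split=> //; last by left=> x y a b; rewrite !pidE => -[<-] [<-].
by exists 1%g; rewrite odd_perm1; split=> // x a; rewrite pidE perm1 => -[].
Qed.

Lemma AM_pprod (s : seq (pfun n)) : {in s, forall g, in_AM g} -> in_AM (pprod s).
Proof.
elim: s => [|g s IH] sAM /=; first exact: AM_pid.
apply: AM_pcomp; first by apply: sAM; rewrite inE eqxx.
by apply: IH => h hs; apply: sAM; rewrite inE hs orbT.
Qed.

Lemma AM_generated A f : {in A, forall g, in_AM g} -> generated A f -> in_AM f.
Proof. by move=> AAM [s /allP sA ->]; apply: AM_pprod => g /sA; exact: AAM. Qed.

End PartialMaps.

Section GapMaps.
Variable n : nat.
Implicit Types (f g : pfun n) (x y : 'I_n).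

(* 0-based: [gapmap a b] misses the point [a] in its domain and [b] in its
   image; the paper's [x_i] is [gapmap i.-1 (i - 3)] for [i >= 3]. *)
Definition gapmap a b : pfun n := opmap n a.+1 b.+1.

Lemma gapmapE a b x : a < n -> b < n ->
  omap val (gapmap a b x) = if val x == a then None else Some (bump b (unbump a x)).
Proof.
move=> an bn; rewrite ffunE /=.
case: eqP => // xa; case: insubP => [y _ yE|]; first by rewrite /= yE.
by move=> /negP[]; have := ltn_ord x; move: xa; rewrite /= /bump /unbump; lia.
Qed.

Lemma gapmap_None a b x : val x = a -> gapmap a b x = None.
Proof. by move=> xa; rewrite ffunE /= xa eqxx. Qed.

Lemma gapmap_Some a b x : a < n -> b < n -> val x != a ->
  {y : 'I_n | gapmap a b x = Some y & y = bump b (unbump a x) :> nat}.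
Proof.
move=> an bn xa; have := gapmapE x an bn; rewrite (negbTE xa).
by case: (gapmap a b x) => // y [<-]; exists y.
Qed.

Lemma gapmap_at a b x y : a < n -> b < n -> val x != a ->
  y = bump b (unbump a x) :> nat -> gapmap a b x = Some y.
Proof.
move=> an bn xa xy; case: (gapmap_Some an bn xa) => z -> zx.
by congr Some; apply: val_inj; rewrite /= zx xy.
Qed.

Lemma gapmap_diagE a x : a < n ->
  omap val (gapmap a a x) = if val x == a then None else Some (val x).
Proof. by move=> an; rewrite gapmapE //; case: eqP => // /eqP xa; rewrite unbumpK. Qed.

Lemma gapmap_comp a b c : a < n -> b < n -> c < n ->
  pcomp (gapmap a b) (gapmap b c) = gapmap a c.
Proof.
move=> an bn cn; apply: pfun_val_inj => x; rewrite pcompE gapmapE //.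
case: (eqVneq (val x) a) => [xa|xa]; first by rewrite gapmap_None.
case: (gapmap_Some an bn xa) => y -> yx /=; rewrite gapmapE //= yx bumpK.
by case: eqP => //; rewrite /bump /unbump; lia.
Qed.

Lemma pinj_gapmap a b : a < n -> b < n -> is_pinj (gapmap a b).
Proof.
move=> an bn x y u xu yu; apply: val_inj.
have := gapmapE x an bn; have := gapmapE y an bn; rewrite xu yu /=.
by case: eqP => // ya; case: eqP => // xa [ux] [uy]; move: ux uy xa ya; rewrite /bump /unbump; lia.
Qed.

Lemma op_gapmap a b : a < n -> b < n -> order_preserving (gapmap a b).
Proof.
move=> an bn x y u v xu yv xy.
have := gapmapE x an bn; have := gapmapE y an bn; rewrite xu yv /=.
by case: eqP => // _; case: eqP => // _ [vy] [ux]; move: vy ux xy; rewrite /bump /unbump; lia.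
Qed.

Lemma PMI_gapmap a b : a < n -> b < n -> in_PMI (gapmap a b).
Proof. by move=> an bn; split; [exact: pinj_gapmap | left; exact: op_gapmap]. Qed.

Lemma AM_gapmap_diag a : a < n -> in_AM (gapmap a a).
Proof.
move=> an; split; last exact: PMI_gapmap.
split; first exact: pinj_gapmap.
exists 1%g; rewrite odd_perm1; split=> // x y; rewrite perm1 => xy; apply: val_inj.
by have := gapmap_diagE x an; rewrite xy; case: eqP => // _ [].
Qed.

(* For [|a - b| = 2], [gapmap a b] is the restriction of a 3-cycle. *)
Lemma AM_gapmap_step a b : a < n -> b < n -> (a == b.+2) || (b == a.+2) ->
  in_AM (gapmap a b).
Proof.
move=> an bn ab; have mn : (a + b)./2 < n by lia.
pose oa := Ordinal an; pose om := Ordinal mn; pose ob := Ordinal bn.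
split; last exact: PMI_gapmap.
split; first exact: pinj_gapmap.
exists (tperm oa om * tperm om ob)%g; split.
  have am : a != (a + b)./2 by apply/eqP; lia.
  have mb : (a + b)./2 != b by apply/eqP; lia.
  by rewrite odd_permM !odd_tperm -!val_eqE /= am mb.
move=> x y xy; apply: val_inj; rewrite permM.
have := gapmapE x an bn; rewrite xy /=; case: eqP => // xa [->].
by rewrite /= !val_tperm /oa /om /ob /=; move: xa ab; repeat case: eqP; rewrite /bump /unbump; lia.
Qed.

Lemma pcomp_gapmap_diagl a f : a < n ->
  (forall x, val x = a -> f x = None) -> pcomp (gapmap a a) f = f.
Proof.
move=> an fa; apply/ffunP => x; rewrite pcompE.
case: (eqVneq (val x) a) => [xa|xa]; first by rewrite gapmap_None // fa.
by have := gapmap_diagE x an; rewrite (negbTE xa); case: (gapmap a a x) => // y [/val_inj ->].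
Qed.

Lemma pcomp_gapmap_diagr a f : a < n ->
  (forall x y, f x = Some y -> val y != a) -> pcomp f (gapmap a a) = f.
Proof.
move=> an fa; apply/ffunP => x; rewrite pcompE.
case fx: (f x) => [y|] //=; have := gapmap_diagE y an; rewrite (negbTE (fa _ _ fx)).
by case: (gapmap a a y) => // z [/val_inj ->].
Qed.

Lemma pprod_gapmap_diag (s : seq nat) x : all (gtn n) s ->
  omap val (pprod [seq gapmap c c | c <- s] x) =
  if val x \in s then None else Some (val x).
Proof.
elim: s x => [|c s IH] x /=; first by rewrite pidE.
move=> /andP[cn sn]; rewrite pcompE inE.
case: (eqVneq (val x) c) => [xc|xc] /=; first by rewrite gapmap_None.
by have := gapmap_diagE x cn; rewrite (negbTE xc); case: (gapmap c c x) => // y [/val_inj ->]; exact: IH.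
Qed.

Lemma partial_id_pprod f : (forall x, f x = None \/ f x = Some x) ->
  f = pprod [seq gapmap c c | c <- [seq val x | x <- enum 'I_n & f x == None]].
Proof.
move=> fid; apply: pfun_val_inj => x; rewrite pprod_gapmap_diag; last first.
  by apply/allP => c /mapP[y _ ->]; exact: ltn_ord.
by rewrite (mem_map val_inj) mem_filter mem_enum andbT; case: (fid x) => ->.
Qed.

Definition gap_point f : option 'I_n := [pick x | f x == None].

Lemma gap_point_gapmap a b : a < n -> b < n -> omap val (gap_point (gapmap a b)) = Some a.
Proof.
move=> an bn; rewrite /gap_point; case: pickP => [x /eqP gx|no_gap]; last first.
  by have := no_gap (Ordinal an); rewrite gapmap_None.
by have := gapmapE x an bn; rewrite gx; case: eqP => [xa _|//]; rewrite /= xa.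
Qed.

Lemma xgen_gapmap i : 3 <= i -> xgen n i = gapmap i.-1 (i - 3).
Proof.
move=> i3; rewrite /xgen /gapmap ifN_eq ?ifN_eq; try by apply/eqP; lia.
by congr opmap; lia.
Qed.

Lemma pprod_xgen_chain j s : 2 * j + 3 <= s <= n ->
  pprod [seq xgen n (s - 2 * i) | i <- iota 0 j.+1] = gapmap s.-1 (s - 2 * j - 3).
Proof.
elim: j s => [|j IH] s /andP[js sn].
  by rewrite /= pcomp_idr subn0 xgen_gapmap.
rewrite -[j.+2]addn1 iotaD map_cat pprod_cat IH; last lia.
rewrite /= pcomp_idr xgen_gapmap; last lia.
rewrite (_ : (s - 2 * (0 + j.+1)).-1 = s - 2 * j - 3) ?gapmap_comp; try lia.
by congr gapmap; lia.
Qed.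

End GapMaps.

Section Reversal.
Variable n : nat.
Implicit Types (f : pfun n) (x : 'I_n).

Lemma hmapE x : hmap n x = Some (rev_ord x).
Proof. exact: ffunE. Qed.

Lemma hmapK : pcomp (hmap n) (hmap n) = pid n.
Proof. by apply/ffunP => x; rewrite pcompE !hmapE /= hmapE rev_ordK pidE. Qed.

Lemma hmap_conj_gapmap a b : a < n -> b < n ->
  pcomp (pcomp (hmap n) (gapmap n a b)) (hmap n) = gapmap n (n.-1 - a) (n.-1 - b).
Proof.
move=> an bn; have a'n : n.-1 - a < n by lia. have b'n : n.-1 - b < n by lia.
apply: pfun_val_inj => x; rewrite !pcompE hmapE /= gapmapE //.
case: (eqVneq (val (rev_ord x)) a) => [xa|xa].
  by rewrite gapmap_None //=; move: xa => /=; case: eqP => //; have := ltn_ord x; lia.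
case: (gapmap_Some an bn xa) => y -> yx; move: xa; rewrite /= hmapE /= yx => xa.
have := ltn_ord x; case: eqP => [|_ xn]; first by move: xa; lia.
by congr Some; rewrite /= /bump /unbump; lia.
Qed.

Lemma gap_point_hmap : gap_point (hmap n) = None.
Proof. by rewrite /gap_point; case: pickP => // x; rewrite hmapE. Qed.

Lemma PMI_hmap : in_PMI (hmap n).
Proof.
split; last by right=> x y a b; rewrite !hmapE => -[<-] [<-] /=; have := ltn_ord y; lia.
move=> x y a; rewrite !hmapE => -[<-] [] yx; apply: val_inj.
by have := ltn_ord x; have := ltn_ord y; move: yx => /=; lia.
Qed.

Lemma op_pcomp_hmap f : order_reversing f -> order_preserving (pcomp f (hmap n)).
Proof.
move=> frev x y a b /pcomp_SomeP[u fu]; rewrite hmapE => -[<-].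
move=> /pcomp_SomeP[v fv]; rewrite hmapE => -[<-] xy /=.
by have := frev _ _ _ _ fu fv xy; have := ltn_ord u; have := ltn_ord v; lia.
Qed.

(* [rev_mid j] reverses the window [j, n-1-j]; peeling off its outer
   transposition computes the parity of [hmap n = rev_mid 0]. *)
Definition rev_mid j x : 'I_n := if j <= x <= n.-1 - j then rev_ord x else x.

Lemma rev_midK j : involutive (rev_mid j).
Proof.
move=> x; rewrite /rev_mid; case: (boolP (j <= x <= n.-1 - j)) => xj; last by rewrite (negbTE xj).
by rewrite ifT ?rev_ordK //=; have := ltn_ord x; move: xj; lia.
Qed.

Lemma val_rev_mid j x : rev_mid j x = (if j <= x <= n.-1 - j then n - x.+1 else x) :> nat.
Proof. by rewrite /rev_mid; case: ifP. Qed.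

Definition rev_mid_perm j : {perm 'I_n} := perm (can_inj (rev_midK j)).

Lemma rev_mid_permE j x : rev_mid_perm j x = rev_mid j x.
Proof. exact: permE. Qed.

Lemma odd_rev_mid_perm j : j <= n./2 -> odd_perm (rev_mid_perm j) = odd (n./2 - j).
Proof.
suff odd_rev k : k <= n./2 -> odd_perm (rev_mid_perm (n./2 - k)) = odd k.
  by move=> jn; rewrite -{1}(subKn jn) odd_rev ?leq_subr.
elim: k => [|k IH] kn.
  rewrite subn0; suff -> : rev_mid_perm n./2 = 1%g by rewrite odd_perm1.
  apply/permP => x.
  rewrite rev_mid_permE perm1 /rev_mid; case: ifP => // /andP[xj jx].
  by apply: val_inj => /=; have := ltn_ord x; lia.
have j0n : n./2 - k.+1 < n by lia. have j1n : n.-1 - (n./2 - k.+1) < n by lia.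
have -> : rev_mid_perm (n./2 - k.+1) =
    (tperm (Ordinal j0n) (Ordinal j1n) * rev_mid_perm (n./2 - k))%g.
  apply/permP => x; rewrite permM !rev_mid_permE; apply: val_inj.
  rewrite /= !val_rev_mid !val_tperm /=; have := ltn_ord x.
  by repeat (case: eqP => /=); repeat case: ifP => /=; lia.
rewrite odd_permM IH ?odd_tperm -?val_eqE /=; last lia.
suff -> : n./2 - k.+1 != n.-1 - (n./2 - k.+1) by [].
by apply/eqP; lia.
Qed.

Lemma AM_hmap : ~~ odd n./2 -> in_AM (hmap n).
Proof.
move=> even_half; split; last exact: PMI_hmap.
split; first by case: PMI_hmap.
exists (rev_mid_perm 0); rewrite odd_rev_mid_perm // subn0; split=> // x a.
rewrite hmapE rev_mid_permE /rev_mid => -[<-]; rewrite ifT //=; have := ltn_ord x; lia.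
Qed.

End Reversal.

Section Generation.
Variables n m : nat.
Hypothesis n_eq : n = (4 * m).+1.
Hypothesis m_gt0 : 0 < m.
Local Notation G := (generated (gen_set n)).

Lemma gen_setE f : (f \in gen_set n) =
  (f \in hmap n :: [seq xgen n i | i <- rev (iota (n + 5)./2 (n - (n + 5)./2).+1)]
         ++ [:: prod_even n; prod_odd n]).
Proof. by rewrite inE. Qed.

Lemma prod_evenE : prod_even n = gapmap n (2 * m).+1 1.
Proof.
rewrite /prod_even (_ : ((n + 3)./2 - 4)./2 = m.-1); last lia.
by rewrite pprod_xgen_chain; [congr gapmap|]; lia.
Qed.

Lemma prod_oddE : prod_odd n = gapmap n (2 * m) 0.
Proof.
rewrite /prod_odd (_ : ((n + 1)./2 - 3)./2 = m.-1); last lia.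
by rewrite pprod_xgen_chain; [congr gapmap|]; lia.
Qed.

Lemma generated_hmap : G (hmap n).
Proof. by apply: generated_mem; rewrite gen_setE inE eqxx. Qed.

Lemma generated_prod_even : G (gapmap n (2 * m).+1 1).
Proof. by apply: generated_mem; rewrite -prod_evenE gen_setE !(inE, mem_cat) eqxx !orbT. Qed.

Lemma generated_prod_odd : G (gapmap n (2 * m) 0).
Proof. by apply: generated_mem; rewrite -prod_oddE gen_setE !(inE, mem_cat) eqxx !orbT. Qed.

Lemma generated_step_down g : 2 * m + 2 <= g <= 4 * m -> G (gapmap n g (g - 2)).
Proof.
move=> g_range; apply: generated_mem.
rewrite (_ : gapmap n g (g - 2) = xgen n g.+1); last by rewrite xgen_gapmap; [congr gapmap|]; lia.
rewrite gen_setE inE mem_cat map_f ?orbT // mem_rev mem_iota; lia.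
Qed.

Lemma generated_mirror a b : a < n -> b < n ->
  G (gapmap n a b) -> G (gapmap n (4 * m - a) (4 * m - b)).
Proof.
move=> an bn Gab; rewrite (_ : 4 * m = n.-1) -?hmap_conj_gapmap //; last lia.
by do 2?apply: generated_pcomp => //; exact: generated_hmap.
Qed.

Lemma generated_step_up c : c.+2 <= 2 * m -> G (gapmap n c c.+2).
Proof.
move=> c2m; have Gd : G (gapmap n (4 * m - c) (4 * m - c - 2)).
  by apply: generated_step_down; lia.
have := generated_mirror _ _ Gd.
have -> : 4 * m - (4 * m - c) = c by lia.
have -> : 4 * m - (4 * m - c - 2) = c.+2 by lia.
by apply; lia.
Qed.

(* The steps [a -> a+2] below the middle 2m, [a -> a-2] above it, and the
   crossings 2m+1 -> 1, 2m-1 -> 4m-1, 2m -> 0, 2m -> 4m connect every point to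
   and from the hub [2m + odd a] of its parity class. *)
Definition reach a b := a = b \/ G (gapmap n a b).

Lemma generated_reach a b c : a < n -> b < n -> c < n ->
  G (gapmap n a b) -> reach b c -> G (gapmap n a c).
Proof.
move=> an bn cn Gab [<- //|Gbc].
by rewrite -(gapmap_comp an bn cn); exact: generated_pcomp.
Qed.

Lemma reach_generated a b c : a < n -> b < n -> c < n ->
  reach a b -> G (gapmap n b c) -> G (gapmap n a c).
Proof.
move=> an bn cn [-> //|Gab] Gbc.
by rewrite -(gapmap_comp an bn cn); exact: generated_pcomp.
Qed.

Lemma reach_trans a b c : a < n -> b < n -> c < n -> reach a b -> reach b c -> reach a c.
Proof. by move=> an bn cn [-> //|Gab] bc; right; exact: generated_reach Gab bc. Qed.

Lemma reach_up a b : a <= b <= 2 * m -> odd a = odd b -> reach a b.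
Proof.
move=> ab abo; have [k bE] : exists k, b = a + 2 * k by exists (b - a)./2; lia.
rewrite {}bE in ab *; elim: k ab {abo} => [|k IH] ab; first by left; lia.
apply: (@reach_trans _ (a + 2 * k)); try lia; first by apply: IH; lia.
by right; rewrite (_ : a + 2 * k.+1 = (a + 2 * k).+2); [apply: generated_step_up|]; lia.
Qed.

Lemma reach_down a b : 2 * m <= b <= a -> a <= 4 * m -> odd a = odd b -> reach a b.
Proof.
move=> ba a4m abo; have [k aE] : exists k, a = b + 2 * k by exists (a - b)./2; lia.
rewrite {}aE in ba a4m *; elim: k ba a4m {abo} => [|k IH] ba a4m; first by left; lia.
apply: (@reach_trans _ (b + 2 * k)); try lia; last by apply: IH; lia.
by right; rewrite (_ : b + 2 * k = b + 2 * k.+1 - 2); [apply: generated_step_down|]; lia.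
Qed.

Lemma reach_cross a b : odd a -> odd b -> a < 2 * m < b -> b < n -> reach a b.
Proof.
move=> ao bo abm bn; have := generated_mirror _ _ generated_prod_even.
rewrite (_ : 4 * m - (2 * m).+1 = 2 * m - 1) ?subn0; try lia.
move=> /(_ ltac:(lia) ltac:(lia)) Gcross.
apply: (@reach_trans _ (2 * m - 1)); try lia; first by apply: reach_up; lia.
right; apply: generated_reach Gcross _; try lia.
by apply: reach_down; lia.
Qed.

Lemma reach_hub a : a < n -> reach a (2 * m + odd a).
Proof.
move=> an; case ao: (odd a); rewrite /= ?addn1 ?addn0.
  case: (leqP a (2 * m)) => a2m; first by apply: reach_cross; rewrite //= ?oddM; lia.
  by apply: reach_down; rewrite //= ?oddM; lia.
case: (leqP a (2 * m)) => a2m; first by apply: reach_up; rewrite ?oddM ?ao; lia.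
by apply: reach_down; rewrite ?oddM ?ao; lia.
Qed.

Lemma generated_hub b : b < n -> G (gapmap n (2 * m + odd b) b).
Proof.
move=> bn; case bo: (odd b); rewrite /= ?addn1 ?addn0.
  apply: generated_reach generated_prod_even _; try lia.
  case: (leqP b (2 * m)) => b2m; first by apply: reach_up; rewrite ?bo; lia.
  by apply: reach_cross; rewrite ?bo //; lia.
case: (leqP b (2 * m)) => b2m.
  apply: generated_reach generated_prod_odd _; try lia.
  by apply: reach_up; rewrite ?bo; lia.
have := generated_mirror _ _ generated_prod_odd; rewrite subn0.
have -> : 4 * m - 2 * m = 2 * m by lia.
move=> /(_ ltac:(lia) ltac:(lia)) Gtop; apply: generated_reach Gtop _; try lia.
by apply: reach_down; rewrite ?oddM ?bo //; lia.
Qed.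

Lemma generated_gapmap a b : a < n -> b < n -> odd a = odd b -> G (gapmap n a b).
Proof.
move=> an bn abo; have := generated_hub bn; rewrite -abo.
by apply: reach_generated (reach_hub an); lia.
Qed.

Lemma gen_set_AM : {in gen_set n, forall f, in_AM f}.
Proof.
have AM_xgen i : 3 <= i <= n -> in_AM (xgen n i).
  move=> i_range; rewrite xgen_gapmap; last lia.
  by apply: AM_gapmap_step; lia.
move=> f; rewrite gen_setE inE mem_cat !inE => /orP[/eqP->|/orP[|/orP[]/eqP->]].
- by apply: AM_hmap; lia.
- by case/mapP => i; rewrite mem_rev mem_iota => i_range ->; apply: AM_xgen; lia.
- by apply: AM_pprod => g /mapP[i]; rewrite mem_iota => i_range ->; apply: AM_xgen; lia.
- by apply: AM_pprod => g /mapP[i]; rewrite mem_iota => i_range ->; apply: AM_xgen; lia.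
Qed.

Lemma card_gen_set : #|gen_set n| = (2 * m).+2.
Proof.
rewrite /gen_set cardsE; set l := rev _.
have l_range i : i \in l -> 2 * m + 3 <= i <= n by rewrite mem_rev mem_iota; lia.
have xgen_gaps : [seq omap val (gap_point (xgen n i)) | i <- l] = [seq Some i.-1 | i <- l].
  by apply/eq_in_map => i /l_range i_range /=; rewrite xgen_gapmap ?gap_point_gapmap //; lia.
have low_notin k : k <= (2 * m).+1 -> k \notin [seq i.-1 | i <- l].
  by move=> km; apply/mapP => -[i /l_range]; lia.
suff /card_uniqP -> : uniq (hmap n :: [seq xgen n i | i <- l] ++ [:: prod_even n; prod_odd n]).
  by rewrite /= size_cat size_map size_rev size_iota /=; lia.
apply: (@map_uniq _ _ (fun f => omap val (gap_point f))).
rewrite map_cons map_cat -map_comp xgen_gaps prod_evenE prod_oddE gap_point_hmap /=.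
rewrite !gap_point_gapmap; try lia.
have -> : [seq Some i.-1 | i <- l] ++ [:: Some (2 * m).+1; Some (2 * m)] =
    map Some ([seq i.-1 | i <- l] ++ [:: (2 * m).+1; 2 * m]) by rewrite map_cat -map_comp.
rewrite (map_inj_uniq Some_inj); apply/andP; split; first by apply/mapP => -[].
rewrite cat_uniq map_inj_in_uniq ?rev_uniq ?iota_uniq; last by move=> i j /l_range ? /l_range ?; lia.
rewrite /= !inE (negbTE (low_notin _ (leqnn _))) (negbTE (low_notin (2 * m) _)) //=.
by rewrite andbT; apply/eqP; lia.
Qed.

End Generation.

Section OrderPreserving.
Variable n : nat.
Implicit Types (f : pfun n) (x y : 'I_n).

Definition weight f := \sum_(x < n) (if f x is Some y then x + y + 1 else 0).

Definition in_dom f k := [exists x, (val x == k) && (f x != None)].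
Definition in_img f k := [exists x, exists y, (val y == k) && (f x == Some y)].

Lemma in_domE f x : in_dom f x = (f x != None).
Proof.
apply/existsP/idP => [[z /andP[/eqP/val_inj -> //]]|fx].
by exists x; rewrite eqxx.
Qed.

Lemma in_imgE f y : in_img f y = [exists x, f x == Some y].
Proof.
apply/existsP/existsP => [[x /existsP[z /andP[/eqP/val_inj -> fx]]]|[x fx]].
  by exists x.
by exists x; apply/existsP; exists y; rewrite eqxx.
Qed.

Definition dom_movable f g := [&& g.+2 < n, ~~ in_dom f g & in_dom f g.+1 || in_dom f g.+2].
Definition img_movable f b := [&& b.+2 < n, ~~ in_img f b & in_img f b.+1 || in_img f b.+2].

Lemma pcomp_gapmap_dom f a c : a < n -> c < n -> (forall x, val x = a -> f x = None) ->
  f = pcomp (gapmap n a c) (pcomp (gapmap n c a) f).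
Proof. by move=> an cn fa; rewrite -pcompA gapmap_comp // pcomp_gapmap_diagl. Qed.

Lemma pcomp_gapmap_img f b c : b < n -> c < n ->
  (forall x y, f x = Some y -> val y != b) ->
  f = pcomp (pcomp f (gapmap n b c)) (gapmap n c b).
Proof. by move=> bn cn fb; rewrite pcompA gapmap_comp // pcomp_gapmap_diagr. Qed.

Lemma weight_dom_move f g : dom_movable f g -> weight (pcomp (gapmap n g.+2 g) f) < weight f.
Proof.
case/and3P=> g2n; have g1n : g.+1 < n by lia. have g0n : g < n by lia.
pose o0 := Ordinal g0n; pose o1 := Ordinal g1n; pose o2 := Ordinal g2n.
have := in_domE f o0; have := in_domE f o1; have := in_domE f o2.
rewrite /= => -> -> -> /negPn/eqP fo0 fo12.
apply: (@ltn_sum_in _ (o0 |: (o1 |: [set o2]))) => [x|].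
  rewrite !inE -!val_eqE /= pcompE => /norP[x0 /norP[x1 x2]].
  by rewrite (@gapmap_at _ _ _ x x) //= ?(eqP x2) //; move: x0 x1 x2; rewrite /bump /unbump; lia.
rewrite !big_setU1 ?big_set1 ?inE -?val_eqE /=;
  try by [apply/norP; split; apply/eqP; lia | apply/eqP; lia].
rewrite !pcompE (@gapmap_at _ _ _ o0 o1) ?(@gapmap_at _ _ _ o1 o2) //=;
  try (rewrite /bump /unbump; lia).
rewrite gapmap_None //= fo0; move: fo12.
by case: (f o1) => [y1|]; case: (f o2) => [y2|] //= _; lia.
Qed.

Lemma weight_img_move f b : img_movable f b -> weight (pcomp f (gapmap n b b.+2)) < weight f.
Proof.
case/and3P=> b2n; have b1n : b.+1 < n by lia. have b0n : b < n by lia.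
pose o0 := Ordinal b0n; pose o1 := Ordinal b1n; pose o2 := Ordinal b2n.
have := in_imgE f o0; have := in_imgE f o1; have := in_imgE f o2.
rewrite /= => -> -> -> /existsPn b_notin img12.
have img_ne_b x y : f x = Some y -> val y != b.
  by move=> fx; apply: contraNneq (b_notin x) => yb; rewrite fx (_ : y = o0) //; apply: val_inj.
have shift x y : f x = Some y -> exists2 z, gapmap n b b.+2 y = Some z & z = bump b.+2 (unbump b y) :> nat.
  by move=> /img_ne_b yb; case: (gapmap_Some b0n b2n yb) => z; exists z.
have [o fo] : exists o, (f o == Some o1) || (f o == Some o2).
  by case/orP: img12 => /existsP[o fo]; exists o; rewrite fo ?orbT.
apply: (@ltn_sum_in _ (pred1 o)) => [x _|]; rewrite ?big_pred1_eq pcompE.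
  case fx: (f x) => [y|] //=; have [z -> zy] := shift _ _ fx.
  by rewrite /= zy /bump /unbump; lia.
move: fo; case fo: (f o) => [y|] //= y12; have [z -> zy] := shift _ _ fo.
by rewrite /= zy /bump /unbump; case/orP: y12 => /eqP[->] /=; lia.
Qed.

(* If [f] moved a point, the hypotheses would force it to fix every point
   below [n-2] and to send [n-2] to [n-1] or [n-1] to [n-2]; its even extension
   would then be the transposition of [n-2] and [n-1]. *)
Lemma op_AI_partial_id f : in_AI f -> order_preserving f ->
  (forall x y, x < y -> f x = None -> f y != None -> x = n - 2 :> nat) ->
  (forall x y, x < y -> (forall z, f z != Some x) -> (exists z, f z = Some y) ->
     x = n - 2 :> nat) ->
  forall o, f o = None \/ f o = Some o.
Proof.
move=> [fI [s [s_even fs]]] fop dom_closed img_closed.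
suff fix_lt k (o : 'I_n) : o < k -> f o = None \/ f o = Some o by move=> o; exact: (fix_lt n).
elim: k o => [//|k IH] o; rewrite ltnS leq_eqVlt => /orP[/eqP ok|]; last exact: IH.
case fo: (f o) => [v|]; [right | by left].
case: (eqVneq v o) => [-> //|vo]; exfalso.
have o_top : n - 2 <= o.
  case: (ltngtP v o) => [vo'|ov|/val_inj vo']; last by rewrite vo' eqxx in vo.
  - case: (IH v _) => [|fv|fv]; first lia.
      by have := dom_closed v o vo' fv; rewrite fo => /(_ isT); lia.
    by move: vo; rewrite (fI _ _ _ fv fo) eqxx.
  have o_notin_img z : f z != Some o.
    apply/eqP => fz; case: (ltngtP z o) => [zo|oz|/val_inj zo].
    - case: (IH z _) => [|fz'|fz']; [lia | by rewrite fz' in fz |].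
      by move: fz; rewrite fz' => -[/(congr1 val)] /=; lia.
    - by have := fop _ _ _ _ fo fz (ltnW oz); lia.
    - by move: fz; rewrite zo fo => -[/(congr1 val)] /=; move/eqP: vo; lia.
  by rewrite (img_closed _ _ ov o_notin_img (ex_intro _ o fo)).
have s_low x : x < n - 2 -> s x = x.
  move=> xn; apply/esym/fs; case: (IH x _) => [|fx|//]; first lia.
  by have := dom_closed x o _ fx; rewrite fo => /(_ _ isT); lia.
have n_gt1 : 1 < n.
  by move: vo; rewrite -val_eqE /=; have := ltn_ord v; have := ltn_ord o; lia.
move/negP: s_even; apply; apply: odd_perm_fix_low s_low _ => //.
by apply: contraNneq vo => s1; rewrite (fs _ _ fo) s1 perm1.
Qed.

Lemma dom_move f g : in_AI f -> order_preserving f -> dom_movable f g ->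
  [/\ f = pcomp (gapmap n g g.+2) (pcomp (gapmap n g.+2 g) f),
      weight (pcomp (gapmap n g.+2 g) f) < weight f,
      in_AI (pcomp (gapmap n g.+2 g) f) & order_preserving (pcomp (gapmap n g.+2 g) f)].
Proof.
move=> fAI fop g_mov; have /and3P[g2n g_notin _] := g_mov.
have [step_AI _] : in_AM (gapmap n g.+2 g) by apply: AM_gapmap_step; lia.
split; [|exact: weight_dom_move|exact: AI_pcomp|].
- apply: pcomp_gapmap_dom; try lia.
  by move=> x xg; apply/eqP; move: g_notin; rewrite -xg in_domE negbK.
- by apply: op_pcomp fop; apply: op_gapmap; lia.
Qed.

Lemma img_move f b : in_AI f -> order_preserving f -> img_movable f b ->
  [/\ f = pcomp (pcomp f (gapmap n b b.+2)) (gapmap n b.+2 b),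
      weight (pcomp f (gapmap n b b.+2)) < weight f,
      in_AI (pcomp f (gapmap n b b.+2)) & order_preserving (pcomp f (gapmap n b b.+2))].
Proof.
move=> fAI fop b_mov; have /and3P[b2n b_notin _] := b_mov.
have [step_AI _] : in_AM (gapmap n b b.+2) by apply: AM_gapmap_step; lia.
split; [|exact: weight_img_move|exact: AI_pcomp|].
- apply: pcomp_gapmap_img; try lia.
  move=> x y fx; apply: contraNneq b_notin => yb.
  by rewrite (_ : b = val y) // in_imgE; apply/existsP; exists x; rewrite fx.
- by apply: op_pcomp fop _; apply: op_gapmap; lia.
Qed.

Lemma immobile_partial_id f : in_AI f -> order_preserving f ->
  (forall g : 'I_n, dom_movable f g = false) -> (forall b : 'I_n, img_movable f b = false) ->
  forall o, f o = None \/ f o = Some o.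
Proof.
move=> fAI fop no_dom no_img; apply: op_AI_partial_id => // x y xy.
  move=> fx fy; apply: (@closed_gap_last (in_dom f) n _ x y); rewrite ?xy ?ltn_ord ?in_domE ?fx ?fy //.
  move=> g g2n g_notin; move/negbT: (no_dom (Ordinal (ltnW (ltnW g2n)))).
  by rewrite /dom_movable /= g2n g_notin negb_or.
move=> x_notin [z fz]; apply: (@closed_gap_last (in_img f) n _ x y); rewrite ?xy ?ltn_ord ?in_imgE //.
- move=> g g2n g_notin; move/negbT: (no_img (Ordinal (ltnW (ltnW g2n)))).
  by rewrite /img_movable /= g2n g_notin negb_or.
- by apply/existsPn => w; exact: x_notin.
- by apply/existsP; exists z; rewrite fz.
Qed.

End OrderPreserving.

Section Completeness.
Variables (n : nat) (A : {set pfun n}).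
Hypothesis gapmap_gen :
  forall a b, a < n -> b < n -> odd a = odd b -> generated A (gapmap n a b).

Lemma generated_op_AI f : in_AI f -> order_preserving f -> generated A f.
Proof.
move: (ltnSn (weight f)); move: {2}(weight f).+1 => N.
elim: N f => [|N IH] f wf fAI fop; first by [].
case: (pickP (fun g : 'I_n => dom_movable f g)) => [g g_mov|no_dom].
  have /and3P[g2n _ _] := g_mov; have [fE w_lt AI' op'] := dom_move fAI fop g_mov; rewrite fE.
  apply: generated_pcomp; last by apply: IH => //; lia.
  by apply: gapmap_gen; lia.
case: (pickP (fun b : 'I_n => img_movable f b)) => [b b_mov|no_img].
  have /and3P[b2n _ _] := b_mov; have [fE w_lt AI' op'] := img_move fAI fop b_mov; rewrite fE.
  apply: generated_pcomp; first by apply: IH => //; lia.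
  by apply: gapmap_gen; lia.
rewrite (partial_id_pprod (immobile_partial_id fAI fop no_dom no_img)).
by apply: generated_pprod => g /mapP[c /mapP[x _ ->] ->]; apply: gapmap_gen; rewrite ?ltn_ord.
Qed.

Hypothesis generated_hmap : generated A (hmap n).
Hypothesis even_half : ~~ odd n./2.

Lemma generated_AM f : in_AM f -> generated A f.
Proof.
move=> [fAI [_ [fop|frev]]]; first exact: generated_op_AI.
have [hAI _] := AM_hmap even_half.
rewrite -[f]pcomp_idr -hmapK -pcompA; apply: generated_pcomp generated_hmap.
by apply: generated_op_AI; [exact: AI_pcomp | exact: op_pcomp_hmap].
Qed.

End Completeness.

Section LowerBound.
Variables (n : nat) (B : {set pfun n}).
Hypothesis n_gt1 : 1 < n.
Hypothesis even_half : ~~ odd n./2.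
Hypothesis B_gen : generates B (@in_AM n).
Implicit Types (f g : pfun n) (x y : 'I_n).

Definition total f := [forall x, f x != None].

Lemma total_op_AI_pid f : in_AI f -> order_preserving f -> total f -> f = pid n.
Proof.
move=> fAI fop /forallP f_total; have [_ [s [_ fs]]] := fAI.
have fsE x : f x = Some (s x) by move: (f_total x); case fx: (f x) => [y|] // _; rewrite -(fs _ _ fx).
have fid := op_AI_partial_id fAI fop.
apply/ffunP => x; rewrite pidE; case: (fid _ _ x) => // [y z _ fy|y z _ y_notin|fx].
- by move: (f_total y); rewrite fy.
- by move: (y_notin ((s^-1)%g y)); rewrite fsE permKV eqxx.
- by move: (f_total x); rewrite fx.
Qed.

Lemma total_AM f : in_AM f -> total f -> f = pid n \/ f = hmap n.
Proof.
move=> [fAI [_ [fop|frev]]] f_total; first by left; exact: total_op_AI_pid.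
right; have [hAI _] := AM_hmap even_half.
have fh_pid : pcomp f (hmap n) = pid n.
  apply: total_op_AI_pid; [exact: AI_pcomp | exact: op_pcomp_hmap |].
  apply/forallP => x; rewrite pcompE; move/forallP: f_total => /(_ x).
  by case: (f x) => //= y _; rewrite hmapE.
by rewrite -[f]pcomp_idr -hmapK -pcompA fh_pid pcomp_idl.
Qed.

Lemma gen_AM g : g \in B -> in_AM g.
Proof. by move=> gB; apply/B_gen; exists [:: g]; rewrite /= ?gB ?pcomp_idr. Qed.

Lemma pprod_total t : all (mem B) t -> all total t ->
  pprod t = pid n \/ (pprod t = hmap n /\ hmap n \in B).
Proof.
elim: t => [|g t IH] /=; first by left.
case/andP=> gB tB /andP[g_total t_total].
have [gE|gE] := total_AM (gen_AM gB) g_total; subst g;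
  case: (IH tB t_total) => [->|[-> hB]]; rewrite ?pcomp_idl ?pcomp_idr ?hmapK;
  by [left | right; split].
Qed.

Lemma partial_factor s : all (mem B) s -> ~~ all total s ->
  exists2 g, g \in B /\ ~~ total g &
  exists2 pi : 'I_n -> 'I_n, pi =1 id \/ pi =1 @rev_ord n &
    forall x, g (pi x) = None -> pprod s x = None.
Proof.
rewrite -has_predC => sB s_partial; case: (split_find s_partial) sB => g t r /= g_partial.
rewrite has_predC negbK cat_rcons all_cat /= => t_total /and3P[tB gB rB].
exists g => //.
have pprodE x : pprod (t ++ g :: r) x = obind (pprod r) (obind g (pprod t x)).
  by rewrite pprod_cat pcompE; case: (pprod t x) => //= y; rewrite pcompE.
case: (pprod_total tB t_total) => [tE|[tE _]]; [exists id; [by left|] | exists (@rev_ord n); [by right|]];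
  by move=> x gx; rewrite pprodE tE ?pidE ?hmapE /= gx.
Qed.

Lemma hmap_neq_pid : hmap n != pid n.
Proof.
by apply/eqP => /ffunP/(_ (Ordinal (ltnW n_gt1))); rewrite hmapE pidE => -[]; lia.
Qed.

Lemma mem_hmap_gen : hmap n \in B.
Proof.
have [s sB hE] := (B_gen (hmap n)).1 (AM_hmap even_half).
case: (boolP (all total s)) => [s_total|s_partial].
  case: (pprod_total sB s_total) => [|[] //]; rewrite -hE.
  by move/eqP; rewrite (negbTE hmap_neq_pid).
have [g [gB /forallPn[y /negPn/eqP gy]] [pi pi_idrev pi_g]] := partial_factor sB s_partial.
have pi_inv : pi (pi y) = y by case: pi_idrev => piE; rewrite !piE ?rev_ordK.
by have := pi_g (pi y); rewrite pi_inv -hE hmapE => /(_ gy).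
Qed.

(* The gap of [g] modulo [c ~ n-1-c], represented by its smaller element. *)
Definition gap_orbit g : option 'I_n :=
  omap (fun c : 'I_n => if 2 * c < n then c else rev_ord c) (gap_point g).

(* The witness is the first non-total factor of a product over [B] equal to
   [gapmap i i]. *)
Lemma gap_orbit_onto (i : 'I_n) : 2 * i < n -> exists2 g, g \in B :\ hmap n & gap_orbit g = Some i.
Proof.
move=> i_low; have [s sB iE] := (B_gen (gapmap n i i)).1 (AM_gapmap_diag (ltn_ord i)).
have gap_i x : pprod s x = None -> x = i.
  rewrite -iE => gx; have := gapmap_diagE x (ltn_ord i).
  by rewrite gx; case: eqP => // /val_inj.
case: (boolP (all total s)) => [s_total|s_partial].
  have := gapmap_None i (erefl (val i)); rewrite iE.
  by case: (pprod_total sB s_total) => [|[]] ->; rewrite ?pidE ?hmapE.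
have [g [gB g_partial] [pi pi_idrev pi_g]] := partial_factor sB s_partial.
have pi_inv x : pi (pi x) = x by case: pi_idrev => piE; rewrite !piE ?rev_ordK.
have g_gap y : g y = None -> y = pi i.
  by move=> gy; rewrite -(pi_inv y); congr pi; apply/gap_i/pi_g; rewrite pi_inv.
exists g.
  rewrite !inE gB andbT; apply: contraNneq g_partial => ->.
  by apply/forallP => x; rewrite hmapE.
rewrite /gap_orbit /gap_point; case: pickP => [c /eqP/g_gap -> | no_gap]; last first.
  by case/forallPn: g_partial => y /negPn; rewrite no_gap.
congr Some; case: pi_idrev => ->; first by rewrite i_low.
by case: ifP; rewrite ?rev_ordK //= => low; apply: val_inj => /=; lia.
Qed.

Lemma card_gen_gt : (n.+1)./2 < #|B|.
Proof.
rewrite (cardsD1 (hmap n)) mem_hmap_gen add1n ltnS.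
have k_le : (n.+1)./2 <= n by lia.
pose emb i := Some (widen_ord k_le i).
have emb_inj : injective emb by move=> i j [] ij; apply: val_inj.
rewrite -[X in X <= _]card_ord -(card_imset _ emb_inj).
apply: leq_trans (leq_imset_card gap_orbit (B :\ hmap n)).
apply/subset_leq_card/subsetP => _ /imsetP[i _ ->].
have [|g gB gE] := @gap_orbit_onto (widen_ord k_le i); first by have := ltn_ord i; rewrite /=; lia.
by apply/imsetP; exists g.
Qed.

End LowerBound.

Theorem theorem5p5 (n : nat) (hn : n %% 4 = 1) (hn1 : 1 < n) :
  generates (gen_set n) (@in_AM n) /\
  (forall A : {set pfun n}, generates A (@in_AM n) -> #|gen_set n| <= #|A|) /\
  #|gen_set n| = (n + 1)./2 + 1 /\
  has_rank (@in_AM n) ((n + 1)./2 + 1).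
Proof.
set m := n %/ 4; have n_eq : n = (4 * m).+1 by rewrite {1}(divn_eq n 4) hn; lia.
have m_gt0 : 0 < m by lia.
have even_half : ~~ odd n./2 by rewrite n_eq; lia.
have gen : generates (gen_set n) (@in_AM n).
  move=> f; split=> [fAM|]; last exact: AM_generated (gen_set_AM n_eq m_gt0).
  exact: generated_AM (@generated_gapmap n m n_eq m_gt0) (generated_hmap n) even_half f fAM.
have card : #|gen_set n| = (n + 1)./2 + 1 by rewrite (card_gen_set n_eq m_gt0); lia.
have min_card A : generates A (@in_AM n) -> #|gen_set n| <= #|A|.
  by move=> A_gen; rewrite card; have := card_gen_gt hn1 even_half A_gen; lia.
do 3!split => //; split; first by exists (gen_set n).
by move=> A /min_card; rewrite card.
Qed.
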